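(* Let $f=(a,b,c,d)$ be a binary cubic form over $\mathbb{F}_q[t]$ of discriminant $D$ whose Hessian $H_f=(P,Q,R)$ is imaginary or unusual, and let $U=2b^3+27a^2d-9abc$. Then $|U|^2\le|P|^3$ and $|a^2D|\le|P|^3$.
   Context: $\mathbb{F}_q$ is a finite field with $\gcd(q,6)=1$; $|H|=q^{\deg H}$ for nonzero $H\in\mathbb{F}_q[t]$, $|0|=0$. A binary cubic form $(a,b,c,d)$ is $ax^3+bx^2y+cxy^2+dy^3$ with discriminant $D=18abcd+b^2c^2-4ac^3-4b^3d-27a^2d^2$; its Hessian is $(P,Q,R)$ with $P=b^2-3ac$, $Q=bc-9ad$, $R=c^2-3bd$, a binary quadratic form of discriminant $-3D$. The Hessian is imaginary if $\deg(-3D)$ is odd, and unusual if $\deg(-3D)$ is even and its leading coefficient is a non-square in $\mathbb{F}_q^*$. One has the identity $4P^3=U^2+27a^2D$. *)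

From HB Require Import structures.
From mathcomp Require Import all_boot all_order all_algebra all_field.
Set Implicit Arguments. Unset Strict Implicit. Unset Printing Implicit Defensive.
Import GRing.Theory.
Local Open Scope ring_scope.

(* Absolute value on F_q[t]: |H| = q^(deg H) for H <> 0, |0| = 0.
   deg H = (size H).-1 in mathcomp. Valued in nat. *)
Definition pabs (F : finFieldType) (H : {poly F}) : nat :=
  if H == 0 then 0%N else (#|F| ^ (size H).-1)%N.

Definition cubic_disc (R : comRingType) (a b c d : R) : R :=
  18 * a * b * c * d + b ^+ 2 * c ^+ 2 - 4 * a * c ^+ 3 - 4 * b ^+ 3 * d
  - 27 * a ^+ 2 * d ^+ 2.

Definition hessP (R : comRingType) (a b c d : R) : R := b ^+ 2 - 3 * a * c.
Definition hessQ (R : comRingType) (a b c d : R) : R := b * c - 9 * a * d.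
Definition hessR (R : comRingType) (a b c d : R) : R := c ^+ 2 - 3 * b * d.

(* Here Delta = -3D for the Hessian. *)
Definition imaginary_disc (F : finFieldType) (Delta : {poly F}) : bool :=
  (Delta != 0) && odd (size Delta).-1.

Definition unusual_disc (F : finFieldType) (Delta : {poly F}) : bool :=
  [&& Delta != 0, ~~ odd (size Delta).-1 &
      ~~ [exists x : F, x ^+ 2 == lead_coef Delta]].

From HB Require Import structures.
From mathcomp Require Import all_boot all_order all_algebra all_field ring.
Set Implicit Arguments.
Unset Strict Implicit.
Unset Printing Implicit Defensive.
Import GRing.Theory.
Local Open Scope ring_scope.

(* The identity 4P^3 = U^2 + 27a^2 D says that (3a)^2 (-3D) = U^2 - 4P^3.  If
   |U|^2 > |P|^3, the right-hand side has the even degree and the square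
   leading coefficient of U^2, so -3D would have even degree and square
   leading coefficient, i.e. it would be neither imaginary nor unusual.  Hence
   |U|^2 <= |P|^3, and then |a^2 D| = |4P^3 - U^2| <= |P|^3 as well, 27 being
   a unit since gcd(q, 6) = 1. *)

Lemma hessian_cubic_identity (R : comRingType) (a b c d : R) :
  27 * a ^+ 2 * cubic_disc a b c d =
  4 * hessP a b c d ^+ 3 - (2 * b ^+ 3 + 27 * a ^+ 2 * d - 9 * a * b * c) ^+ 2.
Proof. rewrite /cubic_disc /hessP; ring. Qed.

Lemma natf_neq0_coprime_card (F : finFieldType) (n : nat) :
  coprime #|F| n -> n%:R != 0 :> F.
Proof.
have [p p_pr charFp] := finPcharP F.
have cardF : #|F| = (p ^ logn p #|F|)%N := card_pprimeChar charFp.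
rewrite -(dvdn_pcharf charFp) cardF.
case: (logn p #|F|) cardF => [|k] cardF; first by have := finNzRing_gt1 F; rewrite cardF.
by rewrite coprime_pexpl // prime_coprime.
Qed.

Lemma pabsM (F : finFieldType) (p q : {poly F}) :
  pabs (p * q) = (pabs p * pabs q)%N.
Proof.
rewrite /pabs mulf_eq0.
have [->|p0] := eqVneq p 0; first by [].
have [->|q0] := eqVneq q 0; first by rewrite orbT muln0.
rewrite /= size_mul // -expnD; congr expn.
move: (size_poly_gt0 p) (size_poly_gt0 q); rewrite p0 q0.
by case: (size p) => // m _; case: (size q) => // n _; rewrite addSn addnS.
Qed.

Lemma pabsX (F : finFieldType) (p : {poly F}) (n : nat) :
  pabs (p ^+ n) = (pabs p ^ n)%N.
Proof.
elim: n => [|n IHn]; first by rewrite expr0 /pabs oner_eq0 size_poly1.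
by rewrite exprS pabsM IHn expnS.
Qed.

Lemma leq_pabs (F : finFieldType) (p q : {poly F}) :
  (size p <= size q)%N -> (pabs p <= pabs q)%N.
Proof.
rewrite /pabs; have [//|p0 spq] := eqVneq p 0.
have q0 : q != 0 by rewrite -size_poly_gt0 (leq_trans _ spq) // size_poly_gt0.
by rewrite (negPf q0) leq_exp2l ?finNzRing_gt1 // -!subn1 leq_sub2r.
Qed.

Lemma sqr_mul_dominated (K : fieldType) (x y w E : {poly K}) :
  x ^+ 2 * E = y ^+ 2 + w -> (size w < size (y ^+ 2))%N ->
  ~~ odd (size E).-1 /\ lead_coef E = (lead_coef y / lead_coef x) ^+ 2.
Proof.
move=> xE_eq w_small.
have y0 : y != 0.
  by apply: contraTneq w_small => ->; rewrite expr0n /= size_poly0.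
have xE0 : x ^+ 2 * E != 0.
  by rewrite -size_poly_eq0 xE_eq size_polyDl // size_poly_eq0 expf_neq0.
have [x0 E0] : x != 0 /\ E != 0.
  by move: xE0; rewrite mulf_eq0 negb_or expf_eq0 /= => /andP[].
have x20 : x ^+ 2 != 0 by rewrite expf_neq0.
split.
  have sizes : ((size (x ^+ 2)).-1 + (size E).-1 = (size (y ^+ 2)).-1)%N.
    rewrite -(size_polyDl w_small) -xE_eq (size_mul x20 E0).
    move: (size_poly_gt0 (x ^+ 2)) (size_poly_gt0 E); rewrite x20 E0.
    by case: (size (x ^+ 2)) => // m _; case: (size E) => // n _; rewrite addSn addnS.
  rewrite !size_exp in sizes.
  by move/(congr1 odd): sizes; rewrite oddD !oddM /= !andbF /= => ->.
have lead_eq : lead_coef x ^+ 2 * lead_coef E = lead_coef y ^+ 2.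
  by rewrite -lead_coef_exp -lead_coefM xE_eq lead_coefDl // lead_coef_exp.
have lx0 : lead_coef x ^+ 2 != 0 by rewrite expf_neq0 ?lead_coef_eq0.
by rewrite expr_div_n -lead_eq mulrAC divff ?mul1r.
Qed.

Lemma size_sqr_le_imaginary_unusual (F : finFieldType) (x y w E : {poly F}) :
  imaginary_disc E || unusual_disc E -> x ^+ 2 * E = y ^+ 2 + w ->
  (size (y ^+ 2) <= size w)%N.
Proof.
move=> E_type xE_eq; rewrite leqNgt; apply/negP => w_small.
have [E_even E_lead] := sqr_mul_dominated xE_eq w_small.
have E_square : [exists r : F, r ^+ 2 == lead_coef E].
  by apply/existsP; exists (lead_coef y / lead_coef x); rewrite E_lead.
by move: E_type; rewrite /imaginary_disc /unusual_disc (negPf E_even) E_square !andbF.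
Qed.

Theorem mainTheorem9 (F : finFieldType) (hq : coprime #|F| 6)
    (a b c d : {poly F}) :
    let D := cubic_disc a b c d in
    let P := hessP a b c d in
    let U := 2 * b ^+ 3 + 27 * a ^+ 2 * d - 9 * a * b * c in
    imaginary_disc (- 3 * D) || unusual_disc (- 3 * D) ->
    (pabs U ^ 2 <= pabs P ^ 3)%N /\ (pabs (a ^+ 2 * D) <= pabs P ^ 3)%N.
Proof.
move=> D P U D_type.
have identity : 27 * a ^+ 2 * D = 4 * P ^+ 3 - U ^+ 2 := hessian_cubic_identity a b c d.
clearbody D P U.
have size_4P3 : (size (4 * P ^+ 3)%R <= size (P ^+ 3))%N.
  by rewrite -polyC_natr mul_polyC size_scale_leq.
have U_small : (size (U ^+ 2) <= size (P ^+ 3))%N.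
  have sqr_eq : (3 * a) ^+ 2 * (- 3 * D) = U ^+ 2 + - (4 * P ^+ 3).
    by rewrite -[U ^+ 2](subKr (4 * P ^+ 3)) -identity addrAC subrr add0r; ring.
  have := size_sqr_le_imaginary_unusual D_type sqr_eq.
  by rewrite size_polyN => /leq_trans->.
have three_neq0 : 3%:R != 0 :> F.
  by apply: natf_neq0_coprime_card; rewrite (coprime_dvdr _ hq).
have aD_small : (size (a ^+ 2 * D)%R <= size (P ^+ 3))%N.
  have k0 : (27%:R : F) != 0 by rewrite (natrM F 3 9) (natrM F 3 3) !mulf_neq0.
  rewrite -(size_scale _ k0) -mul_polyC polyC_natr mulrA identity.
  by rewrite (leq_trans (size_polyD _ _)) // geq_max size_4P3 size_polyN U_small.
by rewrite -!pabsX; split; [exact: leq_pabs U_small | exact: leq_pabs aD_small].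
Qed.
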